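(* If $H$ is a Vorob'ev regular hypergraph, then Graham's algorithm succeeds on $H$.
   Context: A hypergraph $H=(V,E)$ has a finite vertex set $V$ and a set $E$ of nonempty subsets of $V$ (hyperedges). Graham's algorithm: treating the hyperedges as a finite list, repeatedly apply the following operations until neither applies: (1) if a vertex $v$ belongs to exactly one hyperedge $X_i$, delete $v$ from $X_i$ (discarding $X_i$ if it becomes empty); (2) if two hyperedges with distinct indices satisfy $X_i\subseteq X_j$, delete $X_i$. Graham's algorithm succeeds on $H$ if the result has no hyperedges. Vorob'ev regularity: a complex is a hypergraph whose set of hyperedges is closed under taking subsets; the downward closure of $H$ is the complex whose hyperedges are all subsets of hyperedges of $H$. In a complex $\mathcal K$, a hyperedge is maximal if not a proper subset of another hyperedge. For distinct maximal hyperedges $X,Y$, $X$ yields a maximal intersection with $Y$ if there is no maximal hyperedge $Z\notin\{X,Y\}$ with $X\cap Y\subsetneq X\cap Z$. A maximal hyperedge $X$ is extreme if all maximal intersections of $X$ (i.e., the sets $X\cap Y$ over those $Y$ with which $X$ yields a maximal intersection) are equal. The proper vertices of an extreme $X$ are those belonging to no other maximal hyperedge; the normal subcomplex corresponding to $X$ consists of all hyperedges of $\mathcal K$ disjoint from the proper vertices of $X$. A normal series is a sequence $\mathcal K=\mathcal K_0\supset\mathcal K_1\supset\cdots\supset\mathcal K_r$ with each $\mathcal K_{\ell+1}$ a normal subcomplex of $\mathcal K_\ell$ ($0\le\ell<r$) and $\mathcal K_r$ having no extreme hyperedge. $\mathcal K$ is regular if it has a normal series whose last term is the complex without vertices. $H$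 is Vorob'ev regular if its downward closure is regular. *)

From mathcomp Require Import all_boot.
Set Implicit Arguments. Unset Strict Implicit. Unset Printing Implicit Defensive.

Section Hypergraphs.
Variable T : finType.

Inductive star {A : Type} (R : A -> A -> Prop) : A -> A -> Prop :=
| star_refl x : star R x x
| star_step x y z : R x y -> star R y z -> star R x z.

Definition hypergraph (E : {set {set T}}) : Prop := set0 \notin E.

Definition rem_at (s : seq {set T}) (i : nat) : seq {set T} :=
  take i s ++ drop i.+1 s.

Inductive graham_step : seq {set T} -> seq {set T} -> Prop :=
| graham_del_vertex (s : seq {set T}) (i : nat) (v : T) :
    i < size s -> v \in nth set0 s i ->
    count (fun X : {set T} => v \in X) s = 1 ->
    graham_step s
      (if nth set0 s i :\ v == set0 then rem_at s i
       else set_nth set0 s i (nth set0 s i :\ v))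
| graham_del_edge (s : seq {set T}) (i j : nat) :
    i < size s -> j < size s -> i != j ->
    nth set0 s i \subset nth set0 s j ->
    graham_step s (rem_at s i).

Definition graham_terminal (s : seq {set T}) : Prop :=
  forall t, ~ graham_step s t.

Definition graham_succeeds (E : {set {set T}}) : Prop :=
  forall s, star graham_step (enum E) s -> graham_terminal s -> s = [::].

Definition complex (K : {set {set T}}) : Prop :=
  set0 \notin K /\
  (forall X Y : {set T}, X \in K -> Y \subset X -> Y != set0 -> Y \in K).

Definition down_closure (E : {set {set T}}) : {set {set T}} :=
  [set Y : {set T} | (Y != set0) && [exists X : {set T}, (X \in E) && (Y \subset X)]].

Definition maximal_edge (K : {set {set T}}) (X : {set T}) : bool :=
  (X \in K) && [forall Y : {set T}, (Y \in K) ==> ~~ (X \proper Y)].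

Definition max_inter (K : {set {set T}}) (X Y : {set T}) : bool :=
  [&& maximal_edge K X, maximal_edge K Y, X != Y &
   [forall Z : {set T}, (maximal_edge K Z && (Z != X) && (Z != Y)) ==>
              ~~ ((X :&: Y) \proper (X :&: Z))]].

Definition extreme (K : {set {set T}}) (X : {set T}) : Prop :=
  maximal_edge K X /\
  (forall Y Y' : {set T}, max_inter K X Y -> max_inter K X Y' -> X :&: Y = X :&: Y').

Definition proper_vertices (K : {set {set T}}) (X : {set T}) : {set T} :=
  [set v in X | [forall Y : {set T}, (maximal_edge K Y && (Y != X)) ==> (v \notin Y)]].

Definition normal_subcomplex (K : {set {set T}}) (X : {set T})
  : {set {set T}} :=
  [set Y in K | [disjoint Y & proper_vertices K X]].

Definition normal_step (K K' : {set {set T}}) : Prop :=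
  exists X : {set T}, extreme K X /\ K' = normal_subcomplex K X /\ K' \proper K.

Definition regular (K : {set {set T}}) : Prop :=
  complex K /\ star normal_step K set0.

Definition vorobev_regular (E : {set {set T}}) : Prop :=
  regular (down_closure E).

End Hypergraphs.

From mathcomp Require Import all_boot.
Set Implicit Arguments. Unset Strict Implicit. Unset Printing Implicit Defensive.

(* The bridge between the two notions is acyclicity of families of sets,
   defined inductively by adding "ears": X is an ear of M when X meets all
   members of M inside one fixed member of M (or inside the empty set).

   1. Acyclicity is stable under the set-level effect of Graham's two
      operations: deleting a vertex everywhere (acyclic_delv) and deleting
      an edge contained in another one (acyclic_del_sub).  Hence "the
      hyperedges of the list form an acyclic family without empty set" is an
      invariant of the algorithm, and a terminal list satisfying it is empty,
      since the last-added ear always offers an applicable operation.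
   2. A normal step removes exactly one maximal edge X of a complex, and X is
      an ear of the remaining maximal edges (max_edges_normal, extreme_ear);
      so a regular complex has an acyclic family of maximal edges.
   3. The hyperedges of H are obtained from the maximal edges of its downward
      closure by adding edges each lying in a maximal one, which preserves
      acyclicity (acyclic_add_covered). *)

Section AcyclicFamilies.
Variable T : finType.
Implicit Types (M D : {set {set T}}) (X Y Z A B W : {set T}).

Definition ear X M :=
  exists2 Y, Y \in set0 |: M & forall Z, Z \in M -> X :&: Z \subset Y.

Inductive acyclic : {set {set T}} -> Prop :=
| acyclic0 : acyclic set0
| acyclicU X M : X \notin M -> ear X M -> acyclic M -> acyclic (X |: M).

Lemma acyclic_delv (v : T) M :
  acyclic M -> acyclic ([set Z :\ v | Z in M] :\ set0).
Proof.
elim=> [|X {}M XnM [Y Y0M earXY] _ IH]; first by rewrite imset0 set0D; apply: acyclic0.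
set N := [set Z :\ v | Z in M] in IH *.
rewrite imsetU1 -/N.
case: (boolP ((X :\ v == set0) || (X :\ v \in N))) => [XvN|].
  suff -> : (X :\ v |: N) :\ set0 = N :\ set0 by [].
  apply/setP=> W; rewrite !inE; case: (eqVneq W (X :\ v)) => [->|] //=.
  by case/orP: XvN => [/eqP->|->]; rewrite ?eqxx ?andbT.
rewrite negb_or => /andP[Xv0 XvN].
have -> : (X :\ v |: N) :\ set0 = X :\ v |: (N :\ set0).
  by apply/setP=> W; rewrite !inE; case: (eqVneq W (X :\ v)) => [->|] //=; rewrite Xv0.
apply: acyclicU _ _ IH; first by rewrite !inE negb_and XvN orbT.
exists (Y :\ v).
  rewrite !inE; case/setU1P: Y0M => [->|YM]; first by rewrite set0D eqxx.
  by case: eqP => //= _; apply: imset_f.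
move=> _ /setD1P[_ /imsetP[Z ZM ->]].
by rewrite -setDIl setSD ?earXY.
Qed.

(* An expanding map enlarges each edge but no pairwise intersection; such a
   map preserves acyclicity, the images of ear witnesses remaining witnesses. *)
Section Expand.
Variable h : {set T} -> {set T}.

Definition expanding_on M :=
  (forall Z, Z \in M -> Z \subset h Z) /\
  {in M &, forall X Z, X != Z -> h X :&: h Z \subset X :&: Z}.

Lemma expanding_onU X M : expanding_on (X |: M) -> expanding_on M.
Proof.
case=> sub meet; split=> [Z ZM|Z1 Z2 Z1M Z2M].
- by apply: sub; rewrite setU1r.
- by apply: meet; rewrite setU1r.
Qed.

Lemma expanding_inj M : expanding_on M -> {in M &, injective h}.
Proof.
case=> sub meet X Z XM ZM hXZ; apply/eqP; apply: contraT => nXZ.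
have /subsetIP[hZ_X hZ_Z] : h Z \subset X :&: Z.
  by rewrite -[h Z]setIid -{1}hXZ meet.
have XZ : X \subset Z by rewrite (subset_trans (sub X XM)) // hXZ.
have ZX : Z \subset X by rewrite (subset_trans (sub Z ZM)).
by rewrite eqEsubset XZ ZX in nXZ.
Qed.

Lemma acyclic_expand M : acyclic M -> expanding_on M -> acyclic (h @: M).
Proof.
elim=> [|X {}M XnM [Y Y0M earXY] _ IH] exp; first by rewrite imset0; apply: acyclic0.
have [sub meet] := exp; rewrite imsetU1.
apply: acyclicU _ _ (IH (expanding_onU exp)).
  apply/imsetP=> -[Z ZM hXZ].
  have XZ : X = Z by apply: (expanding_inj exp); rewrite ?setU11 ?setU1r.
  by rewrite XZ ZM in XnM.
exists (if Y \in M then h Y else set0).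
  by case: ifP => YM; rewrite !inE ?imset_f ?orbT ?eqxx.
move=> _ /imsetP[Z ZM ->].
have nXZ : X != Z by apply: contraNneq XnM => ->.
apply: subset_trans (meet X Z (setU11 _ _) (setU1r _ ZM) nXZ) _.
apply: subset_trans (earXY Z ZM) _.
case: ifP => YM; first by apply: sub; rewrite setU1r.
by case/setU1P: Y0M => [->|]; rewrite ?YM.
Qed.

End Expand.

Lemma setU1D1 X M A : X != A -> (X |: M) :\ A = X |: (M :\ A).
Proof.
by move=> nXA; apply/setP=> W; rewrite !inE; case: (eqVneq W X) => [->|]; rewrite ?nXA.
Qed.

(* Replacing an edge A by a superset X that meets every edge only inside A
   keeps a family acyclic: the map A |-> X is expanding on M. *)
Lemma acyclic_replace M A X : acyclic M -> A \in M -> A \subset X ->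
  (forall Z, Z \in M -> X :&: Z \subset A) -> acyclic (X |: (M :\ A)).
Proof.
move=> acycM AM AX earXA; pose h Z := if Z == A then X else Z.
have -> : X |: (M :\ A) = h @: M.
  rewrite -{2}(setD1K AM) imsetU1 /h eqxx; congr (_ |: _).
  by rewrite -[LHS]imset_id; apply: eq_in_imset => Z /setD1P[/negbTE->].
have XZ_A Z : Z \in M -> X :&: Z \subset A :&: Z.
  by move=> ZM; rewrite subsetI subsetIr earXA.
apply: acyclic_expand acycM _; split=> [Z _|Z1 Z2 Z1M Z2M nZ12]; rewrite /h.
  by case: eqP => [->|].
case: eqP => [EZ1|_]; case: eqP => [EZ2|_] //.
- by rewrite EZ1 EZ2 eqxx in nZ12.
- by rewrite EZ1 XZ_A.
- by rewrite EZ2 [Z1 :&: X]setIC [Z1 :&: A]setIC XZ_A.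
Qed.

Lemma acyclic_del_sub M A B :
  acyclic M -> A \in M -> B \in M -> A \subset B -> A != B -> acyclic (M :\ A).
Proof.
move=> acycM; elim: acycM B => [|X {}M XnM [Y Y0M earXY] acycM IH] B.
  by rewrite inE.
have [<- _ _ _ _|nXA] := eqVneq X A; first by rewrite setU1K.
have XnMA : X \notin M :\ A by rewrite !inE negb_and XnM orbT.
rewrite setU1D1 // => /setU1P[/eqP|AM]; first by rewrite eq_sym (negbTE nXA).
move=> /setU1P[BX|BM] AB nAB; last first.
  apply: acyclicU XnMA _ (IH B AM BM AB nAB).
  exists (if Y == A then B else Y).
    case: eqP => [_|/eqP nYA]; first by apply/setU1r/setD1P; rewrite eq_sym.
    by move: Y0M; rewrite !inE nYA; case/orP=> ->; rewrite ?orbT.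
  move=> Z /setD1P[_ ZM]; apply: subset_trans (earXY Z ZM) _.
  by case: eqP => [->|].
subst B; have [/andP[YM nYA]|YA] := boolP ((Y \in M) && (Y != A)).
  have AY : A \subset Y by rewrite (subset_trans _ (earXY A AM)) // subsetI AB subxx.
  apply: acyclicU XnMA _ (IH Y AM YM AY _); last by rewrite eq_sym.
  by exists Y => [|Z /setD1P[_ /earXY]]; rewrite // !inE nYA YM orbT.
apply: acyclic_replace => // Z ZM; apply: subset_trans (earXY Z ZM) _.
case/setU1P: Y0M => [->|YM]; first exact: sub0set.
by move: YA; rewrite YM /= negbK => /eqP->.
Qed.

(* Adding edges that each lie inside an edge of an acyclic family keeps it
   acyclic: every added edge is an ear with witness its covering edge. *)
Lemma acyclic_add_covered M D :
  acyclic M -> (forall A, A \in D -> exists2 B, B \in M & A \subset B) ->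
  acyclic (D :|: M).
Proof.
move=> HM; move: {2}#|D| (leqnn #|D|) => n; elim: n D => [|n IH] D leDn cover.
  by move: leDn; rewrite leqn0 cards_eq0 => /eqP->; rewrite set0U.
have [->|[A AD]] := set_0Vmem D; first by rewrite set0U.
have coverD1 : forall Z, Z \in D :\ A -> exists2 B, B \in M & Z \subset B.
  by move=> Z /setD1P[_ /cover].
have leD1n : #|D :\ A| <= n by move: leDn; rewrite (cardsD1 A) AD.
have -> : D :|: M = A |: ((D :\ A) :|: M) by rewrite setUA setD1K.
have [B BM AB] := cover A AD.
case: (boolP (A \in M)) => AM.
  by rewrite (setUidPr _) ?sub1set ?inE ?AM ?orbT //; apply: IH.
apply: acyclicU _ _ (IH _ leD1n coverD1).
  by rewrite !inE negb_or eqxx AM.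
exists B; first by rewrite !inE BM !orbT.
by move=> Z _; rewrite (subset_trans (subsetIl _ _) AB).
Qed.

Implicit Types (s t : seq {set T}).

Lemma perm_set s t : perm_eq s t -> [set X in s] = [set X in t].
Proof. by move=> st; apply/setP=> X; rewrite !inE (perm_mem st). Qed.

Lemma perm_rem_at s i : i < size s -> perm_eq s (nth set0 s i :: rem_at s i).
Proof.
move=> lt_is; rewrite -[s in perm_eq s](cat_take_drop i) (drop_nth set0 lt_is).
by rewrite -cat1s perm_catCA.
Qed.

Lemma perm_set_nth s i Y : i < size s ->
  perm_eq (set_nth set0 s i Y) (Y :: rem_at s i).
Proof. by move=> lt_is; rewrite set_nthE lt_is -cat1s perm_catCA. Qed.

Lemma mem_rem_at s i j : i < size s -> j < size s -> i != j ->
  nth set0 s j \in rem_at s i.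
Proof.
move=> lt_is lt_js nij; rewrite mem_cat.
case: (ltngtP j i) => [lt_ji|lt_ij|eq_ji]; last by rewrite eq_ji eqxx in nij.
  by rewrite -(nth_take set0 lt_ji) mem_nth // size_takel // ltnW.
rewrite -(subnKC lt_ij) -nth_drop mem_nth ?orbT // size_drop ltn_sub2r //.
exact: leq_ltn_trans lt_ij lt_js.
Qed.

Definition graham_inv s := acyclic [set X in s] /\ set0 \notin s.

(* Operation 1 maps the family of hyperedges to its vertex deletion. *)
Lemma graham_inv_delv s i v : i < size s -> v \in nth set0 s i ->
  count (fun X : {set T} => v \in X) s = 1 -> graham_inv s ->
  graham_inv (if nth set0 s i :\ v == set0 then rem_at s i
              else set_nth set0 s i (nth set0 s i :\ v)).
Proof.
set X := nth set0 s i; set R := rem_at s i => lt_is vX count1 [acyc_s s_0].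
have perm_s := perm_rem_at lt_is.
have R_0 : set0 \notin R.
  by apply: contra s_0 => R0; rewrite (perm_mem perm_s) inE R0 orbT.
have vR Z : Z \in R -> Z :\ v = Z.
  move=> ZR; apply/setDidPl; rewrite disjoint_sym disjoints1.
  have : ~~ has (fun X : {set T} => v \in X) R.
    by move: count1; rewrite has_count (permP perm_s) /= vX add1n => -[->].
  by move/hasPn; apply.
have delv_s : [set Z :\ v | Z in [set Z in s]] :\ set0 = (X :\ v |: [set Z in R]) :\ set0.
  rewrite (perm_set perm_s) set_cons imsetU1; congr ((_ |: _) :\ _).
  by rewrite -[RHS]imset_id; apply: eq_in_imset => Z; rewrite inE => /vR.
set t := if X :\ v == set0 then R else set_nth set0 s i (X :\ v).
have set_t : [set Z in t] = (X :\ v |: [set Z in R]) :\ set0.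
  rewrite /t; case: eqP => [->|/eqP Xv0]; first by rewrite setU1K // inE.
  rewrite (perm_set (perm_set_nth _ lt_is)) set_cons.
  apply/setP=> W; rewrite !inE; case: (eqVneq W set0) => [->|//].
  by rewrite eq_sym (negbTE Xv0) (negbTE R_0).
split; first by rewrite set_t -delv_s; apply: acyclic_delv.
by move: (setD11 set0 (X :\ v |: [set Z in R])); rewrite -set_t inE => ->.
Qed.

(* Operation 2 either leaves the family unchanged (a duplicate is removed)
   or deletes an edge contained in another one. *)
Lemma graham_inv_dele s i j : i < size s -> j < size s -> i != j ->
  nth set0 s i \subset nth set0 s j -> graham_inv s -> graham_inv (rem_at s i).
Proof.
set X := nth set0 s i; set Y := nth set0 s j; set R := rem_at s i.
move=> lt_is lt_js nij XY [acyc_s s_0].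
have YR : Y \in R := mem_rem_at lt_is lt_js nij.
have perm_s := perm_rem_at lt_is.
have set_s : [set Z in s] = X |: [set Z in R] by rewrite (perm_set perm_s) set_cons.
split; last by apply: contra s_0 => R0; rewrite (perm_mem perm_s) inE R0 orbT.
have [XR|XnR] := boolP (X \in R).
  by rewrite set_s (setUidPr _) ?sub1set ?inE in acyc_s.
have -> : [set Z in R] = [set Z in s] :\ X by rewrite set_s setU1K ?inE.
apply: (acyclic_del_sub acyc_s (B := Y)) => //; first by rewrite set_s setU11.
  by rewrite set_s setU1r ?inE.
by apply: contraNneq XnR => ->.
Qed.

Lemma graham_inv_step s t : graham_step s t -> graham_inv s -> graham_inv t.
Proof.
case=> [{}s i v lt_is vX count1|{}s i j lt_is lt_js nij XY].
- exact: graham_inv_delv lt_is vX count1.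
- exact: graham_inv_dele lt_is lt_js nij XY.
Qed.

Lemma acyclic_has_ear M : acyclic M -> M != set0 ->
  exists X M', [/\ M = X |: M', X \notin M' & ear X M'].
Proof. by case=> [|X M' XnM earX _]; rewrite ?eqxx // => _; exists X, M'. Qed.

Lemma dup_graham_step s : ~~ uniq s -> exists t, graham_step s t.
Proof.
case/(uniqPn set0)=> i [j [lt_ij lt_js eq_ij]]; exists (rem_at s i).
apply: graham_del_edge (ltn_trans lt_ij lt_js) lt_js _ _; last by rewrite eq_ij.
by rewrite ltn_eqF.
Qed.

(* If the hyperedges of a duplicate-free list s are X |: M' with X an ear of
   M', then either X has a vertex in no other hyperedge (operation 1 applies)
   or X lies inside its ear witness (operation 2 applies). *)
Lemma ear_graham_step s X M' : uniq s -> set0 \notin s ->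
  [set Z in s] = X |: M' -> X \notin M' -> ear X M' -> exists t, graham_step s t.
Proof.
move=> uniq_s s_0 set_s XnM' [Y Y0M' earXY].
have mem_s Z : (Z \in s) = (Z == X) || (Z \in M') by rewrite -in_setU1 -set_s inE.
have X_s : X \in s by rewrite mem_s eqxx.
have lt_Xs : index X s < size s by rewrite index_mem.
have nth_X : nth set0 s (index X s) = X by rewrite nth_index.
have [XM'|/subsetPn[v vX vnM']] := boolP (X \subset \bigcup_(Z in M') Z); last first.
  have vZ_X Z : Z \in s -> (v \in Z) = (Z == X).
    rewrite mem_s => /orP[/eqP->|ZM']; first by rewrite vX eqxx.
    have -> : Z == X = false by apply: contraNF XnM' => /eqP <-.
    by apply: contraNF vnM' => vZ; apply/bigcupP; exists Z.
  eexists; apply: (@graham_del_vertex T s _ v lt_Xs); first by rewrite nth_X.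
  by rewrite (eq_in_count vZ_X) count_uniq_mem ?X_s.
have XY : X \subset Y.
  apply/subsetP=> v vX; have /bigcupP[Z ZM' vZ] := subsetP XM' v vX.
  by apply: (subsetP (earXY Z ZM')); rewrite inE vX.
have YM' : Y \in M'.
  case/setU1P: Y0M' => // Y0; move: XY; rewrite Y0 subset0 => /eqP X0.
  by rewrite -X0 X_s in s_0.
have Y_s : Y \in s by rewrite mem_s YM' orbT.
have nXY : index X s != index Y s.
  by apply: contraNneq XnM' => /(congr1 (nth set0 s)); rewrite nth_X nth_index // => ->.
eexists; apply: (graham_del_edge lt_Xs _ nXY); first by rewrite index_mem.
by rewrite nth_X nth_index.
Qed.

Lemma graham_inv_terminal s : graham_inv s -> graham_terminal s -> s = [::].
Proof.
move=> [acyc_s s_0] term; have [//|s_ne0] := eqVneq s [::]; exfalso.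
have [uniq_s|/dup_graham_step[t]] := boolP (uniq s); last exact: term.
have [|X [M' [set_s XnM' earX]]] := acyclic_has_ear acyc_s.
  case: s s_ne0 {acyc_s s_0 term uniq_s} => // Z s' _.
  by apply/set0Pn; exists Z; rewrite inE mem_head.
by have [t] := ear_graham_step uniq_s s_0 set_s XnM' earX; apply: term.
Qed.

Lemma graham_inv_run s t : star (@graham_step T) s t -> graham_inv s -> graham_inv t.
Proof. by elim=> // s1 s2 s3 step _ IH /(graham_inv_step step). Qed.

Implicit Types (K : {set {set T}}).

Definition max_edges K := [set X | maximal_edge K X].

Lemma maximal_edgeP K X :
  reflect (X \in K /\ forall Y, Y \in K -> ~~ (X \proper Y)) (maximal_edge K X).
Proof.
by apply: (iffP andP) => -[XK maxX]; split=> //; apply/forall_inP.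
Qed.

Lemma max_above K A : A \in K -> exists2 B, maximal_edge K B & A \subset B.
Proof.
move=> AK; pose Q B := (B \in K) && (A \subset B).
have QA : Q A by rewrite /Q AK subxx.
have [B /andP[BK AB] maxB] := @arg_maxnP _ A Q (fun B : {set T} => #|B|) QA.
exists B => //; apply/maximal_edgeP; split=> // C CK; apply/negP=> BC.
have := maxB C; rewrite /Q CK (subset_trans AB (proper_sub BC)) => /(_ isT).
by rewrite /geq /= leqNgt (proper_card BC).
Qed.

(* The intersection of X with another maximal edge is contained in a maximal
   intersection of X (take the largest intersection above it). *)
Lemma to_max_inter K X Z : maximal_edge K X -> maximal_edge K Z -> Z != X ->
  exists2 W, max_inter K X W & X :&: Z \subset X :&: W.
Proof.
move=> maxX maxZ nZX.
pose Q W := [&& maximal_edge K W, W != X & X :&: Z \subset X :&: W].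
have QZ : Q Z by rewrite /Q maxZ nZX subxx.
have [W /and3P[maxW nWX ZW] maxQ] := @arg_maxnP _ Z Q (fun W => #|X :&: W|) QZ.
exists W => //; rewrite /max_inter maxX maxW eq_sym nWX /=.
apply/forallP=> Z'; apply/implyP=> /andP[/andP[maxZ' nZ'X] _]; apply/negP=> WZ'.
have := maxQ Z'; rewrite /Q maxZ' nZ'X (subset_trans ZW (proper_sub WZ')) => /(_ isT).
by rewrite /geq /= leqNgt (proper_card WZ').
Qed.

(* An extreme edge is an ear of the other maximal edges: the common value of
   its maximal intersections bounds all its intersections. *)
Lemma extreme_ear K X : extreme K X -> ear X (max_edges K :\ X).
Proof.
case=> maxX extX; have [->|/set0Pn[Z0]] := eqVneq (max_edges K :\ X) set0.
  by exists set0; rewrite ?setU11 // => Z; rewrite inE.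
rewrite !inE => /andP[nZ0X maxZ0]; have [W0 XW0 _] := to_max_inter maxX maxZ0 nZ0X.
have /and4P[_ maxW0 nXW0 _] := XW0.
exists W0; first by rewrite !inE maxW0 [W0 == X]eq_sym nXW0 orbT.
move=> Z; rewrite !inE => /andP[nZX maxZ]; have [W XW ZW] := to_max_inter maxX maxZ nZX.
by rewrite (subset_trans ZW) // (extX _ _ XW XW0) subsetIr.
Qed.

Lemma normal_subcomplex_complex K X : complex K -> complex (normal_subcomplex K X).
Proof.
case=> K_0 closedK; split; first by rewrite inE (negbTE K_0).
move=> Y Z; rewrite !inE => /andP[YK disjY] ZY Z_0.
by rewrite (closedK Y Z) //= (disjointWl ZY).
Qed.

Section NormalStep.
Variables (K : {set {set T}}) (X : {set T}).
Hypotheses (complexK : complex K) (extX : extreme K X).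
Let P := proper_vertices K X.
Let K' := normal_subcomplex K X.

Lemma mem_normal Y : (Y \in K') = (Y \in K) && [disjoint Y & P].
Proof. by rewrite inE. Qed.

Lemma max_other_in_normal W : maximal_edge K W -> W != X -> W \in K'.
Proof.
move=> maxW nWX; rewrite mem_normal (maximal_edgeP _ _ maxW).1 /=.
rewrite disjoint_subset; apply/subsetP=> v vW; rewrite !inE negb_and.
by apply/orP; right; apply/forallPn; exists W; rewrite maxW nWX vW.
Qed.

Lemma improper_vertices_sub_ear Y :
  (forall Z, Z \in max_edges K :\ X -> X :&: Z \subset Y) -> X :\: P \subset Y.
Proof.
move=> earY; apply/subsetP=> v; rewrite !inE negb_and negb_forall => /andP[+ vX].
rewrite vX /= => /existsP[Z]; rewrite negb_imply negbK => /andP[/andP[maxZ nZX] vZ].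
by apply: (subsetP (earY Z _)); rewrite !inE ?nZX ?maxZ ?vX.
Qed.

Lemma normal_below_other_max W : W \in K' ->
  exists2 C, C \in max_edges K :\ X & W \subset C.
Proof.
rewrite mem_normal => /andP[WK disjWP].
have [C maxC WC] := max_above WK.
have [CX|nCX] := eqVneq C X; last by exists C; rewrite // !inE nCX maxC.
have [Y Y0 earY] := extreme_ear extX.
have WY : W \subset Y.
  apply: subset_trans (improper_vertices_sub_ear earY).
  by rewrite subsetD -CX WC disjWP.
exists Y => //; case/setU1P: Y0 => // Y0.
have W_0 : W != set0 by apply: contraNneq complexK.1 => <-.
by move: WY W_0; rewrite Y0 subset0 => ->.
Qed.

Lemma max_edges_normal : max_edges K' = max_edges K :\ X.
Proof.
apply/setP=> W; rewrite !inE; apply/idP/idP.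
  case/maximal_edgeP=> WK' maxW; have [C] := normal_below_other_max WK'.
  rewrite !inE => /andP[nCX maxC] WC.
  suff -> : W = C by rewrite nCX maxC.
  by apply/eqP; rewrite eqEproper WC maxW ?max_other_in_normal.
case/andP=> nWX maxW; apply/maximal_edgeP; split; first exact: max_other_in_normal.
by move=> Y; rewrite mem_normal => /andP[YK _]; apply: (maximal_edgeP _ _ maxW).2.
Qed.

End NormalStep.

(* A normal step adds back a single maximal edge as an ear. *)
Lemma normal_step_acyclic K K' : complex K -> normal_step K K' ->
  acyclic (max_edges K') -> acyclic (max_edges K).
Proof.
move=> complexK [X [extX [-> _]]]; rewrite max_edges_normal // => acycK'.
have maxX : X \in max_edges K by rewrite inE; case: extX.
rewrite -(setD1K maxX); apply: acyclicU _ _ acycK'; [by rewrite setD11 | exact: extreme_ear].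
Qed.

Lemma regular_acyclic K : regular K -> acyclic (max_edges K).
Proof.
case=> complexK; move Ke: set0 => K0 steps.
elim: steps complexK Ke => [{}K complexK <-|K1 K2 K3 step _ IH complexK1 K3_0].
  suff -> : max_edges set0 = set0 by exact: acyclic0.
  by apply/setP=> X; rewrite !inE; apply/negP=> /maximal_edgeP[]; rewrite inE.
have complexK2 : complex K2.
  by case: (step) => X [_ [-> _]]; apply: normal_subcomplex_complex.
exact: normal_step_acyclic complexK1 step (IH complexK2 K3_0).
Qed.

(* A hypergraph is acyclic when the maximal edges of its downward closure
   are: these maximal edges are hyperedges covering all the others. *)
Lemma hypergraph_acyclic E : hypergraph E ->
  acyclic (max_edges (down_closure E)) -> acyclic E.
Proof.
move=> E_0 acycD; set D := down_closure E in acycD.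
have inD Y : (Y \in D) = (Y != set0) && [exists X, (X \in E) && (Y \subset X)].
  by rewrite inE.
have ED A : A \in E -> A \in D.
  move=> AE; rewrite inD; apply/andP; split; first by apply: contraNneq E_0 => <-.
  by apply/existsP; exists A; rewrite AE subxx.
have maxD_E : max_edges D \subset E.
  apply/subsetP=> X; rewrite inE => /maximal_edgeP[].
  rewrite inD => /andP[_ /existsP[A /andP[AE XA]]] maxX.
  have := maxX A (ED A AE); rewrite properE XA /= negbK => AX.
  suff -> : X = A by [].
  by apply/eqP; rewrite eqEsubset XA AX.
have -> : E = E :|: max_edges D by apply/esym/setUidPl.
apply: acyclic_add_covered acycD _ => A AE.
by have [B maxB AB] := max_above (ED A AE); exists B; rewrite ?inE.
Qed.

End AcyclicFamilies.

Theorem lemma17 (T : finType) (E : {set {set T}}) :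
  hypergraph E -> vorobev_regular E -> graham_succeeds E.
Proof.
move=> E_0 regE s run term; apply: graham_inv_terminal term.
apply: graham_inv_run run _; split; last by rewrite mem_enum.
have -> : [set X in enum E] = E by apply/setP=> X; rewrite inE mem_enum.
exact: hypergraph_acyclic E_0 (regular_acyclic regE).
Qed.
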